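(* Let $X$ be a convex metric space over a Boolean ring $B$, $0\in X$, and $R=\{x_{1},\ldots,x_{n}\}$ a referential of $(X,0)$. Let $Y$ be a convex metric space over $B$ and $0'\in Y$. A map $f:R\to Y$ extends to a contractive map $\hat{f}:X\to Y$ with $\hat f(0)=0'$ if and only if $d(0',f(x_{i}))\le d(0,x_{i})$ for $i=1,\ldots,n$; moreover such an extension is unique.
   Context: $B$ is a Boolean ring ($a\vee b=a+b+ab$, $a\le b\iff ab=a$; $a_1\oplus\cdots\oplus a_n$ denotes a sum of pairwise disjoint elements). A Boolean metric space over $B$: set $X$ with $d:X\times X\to B$, $d(x,y)=0\iff x=y$, symmetric, $d(x,z)\le d(x,y)\vee d(y,z)$. For $x_1,\dots,x_n\in X$, $a_i\in B$ with $a_1\oplus\cdots\oplus a_n=1$, $x$ is a convex combination of the $x_i$ with coefficients $a_i$ if $a_id(x,x_i)=0$ for all $i$; $X$ is convex if all such combinations exist. A map is contractive if $d(f(x),f(y))\le d(x,y)$. In $(X,0)$: $|x|=d(0,x)$; $x\perp y$ iff $d(x,y)=|x|\vee|y|$; a finite $R\subseteq X$ is orthogonal if $0\notin R$ and distinct elements are orthogonal; a referential of $(X,0)$ is an orthogonal $R$ such that every element of $X$ is a convex combination of elements of $R\cup\{0\}$. *)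

From HB Require Import structures.
From mathcomp Require Import all_boot all_order all_algebra.
Set Implicit Arguments. Unset Strict Implicit. Unset Printing Implicit Defensive.
Import GRing.Theory.
Local Open Scope ring_scope.

Definition boolean_ring (B : comPzRingType) : Prop := forall a : B, a * a = a.

Definition bjoin (B : comPzRingType) (a b : B) : B := a + b + a * b.
Definition ble (B : comPzRingType) (a b : B) : Prop := a * b = a.

Definition bmetric (B : comPzRingType) (X : Type) (d : X -> X -> B) : Prop :=
  [/\ (forall x y, d x y = 0 <-> x = y),
      (forall x y, d x y = d y x) &
      (forall x y z, ble (d x z) (bjoin (d x y) (d y z)))].

Definition bpartition (B : comPzRingType) (n : nat) (a : 'I_n -> B) : Prop :=
  (forall i j, i != j -> a i * a j = 0) /\ \sum_(i < n) a i = 1.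

Definition convex_comb (B : comPzRingType) (X : Type) (d : X -> X -> B)
  (n : nat) (xs : 'I_n -> X) (a : 'I_n -> B) (x : X) : Prop :=
  forall i, a i * d x (xs i) = 0.

Definition bconvex (B : comPzRingType) (X : Type) (d : X -> X -> B) : Prop :=
  forall (n : nat) (xs : 'I_n -> X) (a : 'I_n -> B),
    bpartition a -> exists x, convex_comb d xs a x.

Definition contractive (B : comPzRingType) (X Y : Type)
  (d : X -> X -> B) (d' : Y -> Y -> B) (f : X -> Y) : Prop :=
  forall x y, ble (d' (f x) (f y)) (d x y).

Definition bnorm (B : comPzRingType) (X : Type) (d : X -> X -> B) (o x : X) : B :=
  d o x.
Definition borth (B : comPzRingType) (X : Type) (d : X -> X -> B) (o x y : X) : Prop :=
  d x y = bjoin (bnorm d o x) (bnorm d o y).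

Definition referential (B : comPzRingType) (X : Type) (d : X -> X -> B) (o : X)
  (n : nat) (xs : 'I_n -> X) : Prop :=
  [/\ injective xs,
      (forall i, xs i <> o),
      (forall i j, i != j -> borth d o (xs i) (xs j)) &
      (forall x : X, exists (m : nat) (ys : 'I_m -> X) (a : 'I_m -> B),
          [/\ forall k, ys k = o \/ exists i, ys k = xs i,
              bpartition a &
              convex_comb d ys a x])].

From mathcomp Require Import all_boot all_order all_algebra.
From Stdlib Require Import ClassicalEpsilon.
Set Implicit Arguments. Unset Strict Implicit.
Import GRing.Theory.
Local Open Scope ring_scope.

(* The key device is "localisation": an element c of the Boolean ring cuts
   out a piece of the space, and c * d x y is the distance seen on that piece.
   If c * d x x' = 0 then x and x' are indistinguishable on c, so
   c * d x z = c * d x' z (dist_shift).  Since the coefficients of a convex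
   combination sum to 1, an identity of B holds as soon as it holds on every
   piece a_k (partition_eq).

   Call u an image candidate of x if x and u are convex combinations, with the
   same coefficients, of corresponding "base pairs" (o, o') or (x_i, f x_i).
   Under the hypothesis d(o', f x_i) <= d(o, x_i), base pairs are contractive
   (this uses the orthogonality of the referential), and by localisation so
   are candidates: d(u, v) <= d(x, y).  Taking x = y shows that candidates are
   unique.  Every x has a candidate (referential + convexity of Y), and every
   contractive extension g yields the candidate g x.  The theorem follows:
   the extension is x |-> the candidate of x, and uniqueness is uniqueness of
   candidates. *)

Section BooleanRingFacts.

Variable B : comPzRingType.

Lemma addxx (HB : boolean_ring B) (a : B) : a + a = 0.
Proof.
have := HB (a + a); rewrite mulrDl !mulrDr !HB => H.
by apply: (@addrI _ (a + a)); rewrite addr0.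
Qed.

Lemma ble_compl (HB : boolean_ring B) (s t : B) :
  ble s t <-> s * (1 + t) = 0.
Proof.
rewrite /ble mulrDr mulr1; split => [->|H]; first exact: addxx.
by rewrite -[s * t]add0r -(addxx HB s) -addrA H addr0.
Qed.

Lemma bjoin_compl (a b : B) : 1 + bjoin a b = (1 + a) * (1 + b).
Proof. by rewrite /bjoin mulrDl !mulrDr !mul1r mulr1 !addrA (addrAC 1 b a). Qed.

Lemma compl_antitone (HB : boolean_ring B) (a a' : B) :
  ble a a' -> (1 + a') * (1 + a) = 1 + a'.
Proof.
rewrite /ble => Ha.
by rewrite mulrDl mul1r mulrDr mulr1 (mulrC a' a) Ha addrACA addxx // addr0.
Qed.

Lemma ble_join_mono (HB : boolean_ring B) (s a b a' b' : B) :
  ble s (bjoin a b) -> ble a a' -> ble b b' -> ble s (bjoin a' b').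
Proof.
move=> /(ble_compl HB); rewrite bjoin_compl => Hs /(compl_antitone HB) Ha
  /(compl_antitone HB) Hb.
apply/(ble_compl HB); rewrite bjoin_compl -Ha -Hb.
by rewrite mulrACA (mulrCA s) Hs mulr0.
Qed.

Lemma ble_vanish (c s t : B) : ble s t -> c * t = 0 -> c * s = 0.
Proof. by rewrite /ble => <- Ht; rewrite mulrCA Ht mulr0. Qed.

Lemma ble_join_vanish (c e s t : B) :
  c * e = 0 -> ble s (bjoin e t) -> c * s = c * s * t.
Proof.
rewrite /ble /bjoin => Hc Hs.
by rewrite -{1}Hs !mulrDr !mulrA (mulrAC c s e) Hc !mul0r add0r addr0.
Qed.

Lemma ble_on_piece (c s s0 t t0 : B) :
  c * s = c * s0 -> c * t = c * t0 -> ble s0 t0 -> c * s = c * s * t.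
Proof.
rewrite /ble => Hs Ht H0.
by rewrite Hs -mulrA mulrCA Ht mulrCA H0.
Qed.

Lemma partition_eq (m : nat) (a : 'I_m -> B) (s t : B) :
  \sum_(k < m) a k = 1 -> (forall k, a k * s = a k * t) -> s = t.
Proof.
move=> Ha Hst; rewrite -[s]mul1r -[t]mul1r -Ha !mulr_suml.
by apply: eq_bigr => k _; exact: Hst.
Qed.

End BooleanRingFacts.

Section BooleanMetricFacts.

Variables (B : comPzRingType) (X : Type) (d : X -> X -> B).
Hypothesis HX : bmetric d.

Lemma dxx (x : X) : d x x = 0.
Proof. by case: HX => H _ _; apply/H. Qed.

Lemma dsym (x y : X) : d x y = d y x.
Proof. by case: HX. Qed.

Lemma dtri (x y z : X) : ble (d x z) (bjoin (d x y) (d y z)).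
Proof. by case: HX. Qed.

Lemma dist_shift (c : B) (x x' z : X) :
  c * d x x' = 0 -> c * d x z = c * d x' z.
Proof.
move=> Hc.
have H1 := ble_join_vanish Hc (dtri x x' z).
have H2 : c * d x' z = c * d x' z * d x z.
  by apply: (ble_join_vanish (e := d x' x)); [rewrite dsym | exact: dtri].
by rewrite H1 H2 mulrAC.
Qed.

End BooleanMetricFacts.

Section Extension.

Variables (B : comPzRingType) (X : Type) (d : X -> X -> B) (o : X).
Variables (n : nat) (xs : 'I_n -> X).
Variables (Y : Type) (d' : Y -> Y -> B) (o' : Y) (f : 'I_n -> Y).
Hypotheses (HB : boolean_ring B) (HX : bmetric d) (HY : bmetric d').
Hypothesis HR : referential d o xs.

Definition base_pair (p : X) (w : Y) : Prop :=
  (p = o /\ w = o') \/ (exists i, p = xs i /\ w = f i).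

Definition candidate (x : X) (u : Y) : Prop :=
  exists m (ys : 'I_m -> X) (ws : 'I_m -> Y) (a : 'I_m -> B),
  [/\ forall k, base_pair (ys k) (ws k), bpartition a,
      convex_comb d ys a x & convex_comb d' ws a u].

Lemma base_candidate (p : X) (w : Y) : base_pair p w -> candidate p w.
Proof.
move=> H; exists 1%N, (fun _ => p), (fun _ => w), (fun _ => 1).
split=> //.
- split; last by rewrite big_ord1.
  by move=> i j; rewrite !ord1 eqxx.
- by move=> k; rewrite dxx // mulr0.
- by move=> k; rewrite dxx // mulr0.
Qed.

(* Every point has a candidate: represent it on the referential and take the
   same combination of the corresponding values in the convex space Y. *)
Lemma candidate_exists (HYc : bconvex d') (x : X) : exists u, candidate x u.
Proof.
case: HR => _ _ _ /(_ x) [m [ys [a [Hys Ha Hx]]]].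
have /ClassicalEpsilon.choice [ws Hws] :
    forall k : 'I_m, exists w, base_pair (ys k) w.
  move=> k; case: (Hys k) => [E|[i E]]; first by exists o'; left.
  by exists (f i); right; exists i.
have [u Hu] := HYc m ws a Ha.
by exists u, m, ys, ws, a.
Qed.

Lemma extension_candidate (g : X -> Y) :
  contractive d d' g -> g o = o' -> (forall i, g (xs i) = f i) ->
  forall x, candidate x (g x).
Proof.
move=> Hg Hg0 Hgi x.
case: HR => _ _ _ /(_ x) [m [ys [a [Hys Ha Hx]]]].
exists m, ys, (g \o ys), a; split=> // [k|k].
- rewrite /base_pair /=; case: (Hys k) => [->|[i ->]].
    by left; rewrite Hg0.
  by right; exists i; rewrite Hgi.
- exact: ble_vanish (Hg x (ys k)) (Hx k).
Qed.

Hypothesis Hf : forall i, ble (d' o' (f i)) (d o (xs i)).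

(* Base pairs are contractive; for two referential points this is where
   orthogonality d(x_i, x_j) = |x_i| \/ |x_j| is used. *)
Lemma base_pair_contractive (p q : X) (w w' : Y) :
  base_pair p w -> base_pair q w' -> ble (d' w w') (d p q).
Proof.
case: HR => _ _ Horth _.
case=> [[-> ->]|[i [-> ->]]] [[-> ->]|[j [-> ->]]].
- by rewrite dxx //; exact: mul0r.
- exact: Hf.
- by rewrite dsym // (dsym HX); exact: Hf.
- case: (eqVneq i j) => [->|ij]; first by rewrite dxx //; exact: mul0r.
  rewrite (Horth _ _ ij) /bnorm.
  apply: (ble_join_mono HB (dtri HY (f i) o' (f j))) => //.
  by rewrite dsym //; exact: Hf.
Qed.

(* Candidates are contractive: on each piece a_k * b_l the distances reduce to
   those between base pairs. *)
Lemma candidate_contractive (x y : X) (u v : Y) :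
  candidate x u -> candidate y v -> ble (d' u v) (d x y).
Proof.
move=> [m [ys [ws [a [HP [_ Ha] Hx Hu]]]]] [p [zs [ws' [b [HP' [_ Hb] Hy Hv]]]]].
rewrite /ble; apply/esym/(partition_eq Ha) => k; apply: (partition_eq Hb) => l.
rewrite !mulrA; set c := b l * a k.
have on_a e : a k * e = 0 -> c * e = 0 by move=> He; rewrite /c -mulrA He mulr0.
have on_b e : b l * e = 0 -> c * e = 0 by move=> He; rewrite /c mulrAC He mul0r.
apply: (ble_on_piece (s0 := d' (ws k) (ws' l)) (t0 := d (ys k) (zs l))).
- rewrite (dist_shift HY _ (on_a _ (Hu k))) (dsym HY (ws k) v).
  by rewrite (dist_shift HY _ (on_b _ (Hv l))) (dsym HY (ws' l)).
- rewrite (dist_shift HX _ (on_a _ (Hx k))) (dsym HX (ys k) y).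
  by rewrite (dist_shift HX _ (on_b _ (Hy l))) (dsym HX (zs l)).
- exact: base_pair_contractive.
Qed.

Lemma candidate_unique (x : X) (u v : Y) :
  candidate x u -> candidate x v -> u = v.
Proof.
move=> Hu Hv; case: HY => Hd' _ _; apply/Hd'.
by have := candidate_contractive Hu Hv; rewrite /ble dxx // mulr0.
Qed.

End Extension.

Theorem mainTheorem10 (B : comPzRingType) (HB : boolean_ring B)
  (X : Type) (d : X -> X -> B) (HX : bmetric d) (HXc : bconvex d) (o : X)
  (n : nat) (xs : 'I_n -> X) (HR : referential d o xs)
  (Y : Type) (d' : Y -> Y -> B) (HY : bmetric d') (HYc : bconvex d') (o' : Y)
  (f : 'I_n -> Y) :
  ((exists fh : X -> Y,
      [/\ contractive d d' fh, fh o = o' & forall i, fh (xs i) = f i])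
   <-> (forall i, ble (d' o' (f i)) (d o (xs i))))
  /\ (forall g h : X -> Y,
      [/\ contractive d d' g, g o = o' & forall i, g (xs i) = f i] ->
      [/\ contractive d d' h, h o = o' & forall i, h (xs i) = f i] ->
      forall x, g x = h x).
Proof.
have necessary (g : X -> Y) :
    [/\ contractive d d' g, g o = o' & forall i, g (xs i) = f i] ->
    forall i, ble (d' o' (f i)) (d o (xs i)).
  by move=> [Hg <- Hgi] i; rewrite -Hgi; exact: Hg.
split; first split.
- by move=> [fh /necessary].
- move=> Hf.
  have /ClassicalEpsilon.choice [fh Hfh] := candidate_exists o' f HR HYc.
  have fix_base p w : base_pair o xs o' f p w -> fh p = w.
    by move=> Hp; apply: (candidate_unique HB HX HY HR Hf (Hfh p));
      exact: base_candidate.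
  exists fh; split=> [x y||i].
  + exact: (candidate_contractive HB HX HY HR Hf).
  + by apply: fix_base; left.
  + by apply: fix_base; right; exists i.
- move=> g h Hg Hh x; have Hf := necessary g Hg.
  case: Hg Hh => [Hg Hg0 Hgi] [Hh Hh0 Hhi].
  exact: (candidate_unique HB HX HY HR Hf
            (extension_candidate HR Hg Hg0 Hgi x) (extension_candidate HR Hh Hh0 Hhi x)).
Qed.
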